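(* Let $\{a(n)\}_{n\in\mathbb{N}}$ be a sequence of non-negative numbers with $\sum_{n=1}^{\infty}a(n)\le 1$, and for $n\in\mathbb{N}$ let $B_n:=\{n,2n,\ldots,n^2\}$. Then for every $\varepsilon>0$ there exist infinitely many $n\in\mathbb{N}$ such that $\sum_{\lambda,\mu\in B_n,\ \mu<\lambda}a(\lambda-\mu)<\varepsilon$. *)

From mathcomp Require Import all_boot all_order all_algebra.
From mathcomp Require Import all_classical all_reals.
Set Implicit Arguments. Unset Strict Implicit. Unset Printing Implicit Defensive.
Import Order.TTheory GRing.Theory Num.Theory.
Local Open Scope ring_scope.

Definition B (n : nat) : seq nat := [seq (k * n)%N | k <- iota 1 n].

Definition Bsum (R : realType) (a : nat -> R) (n : nat) : R :=
  \sum_(l <- B n) \sum_(m <- B n | (m < l)%N) a (l - m)%N.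

From mathcomp Require Import all_boot all_order all_algebra.
From mathcomp Require Import all_classical all_reals.
From mathcomp Require Import zify lra.
Import Order.TTheory GRing.Theory Num.Theory.

(* Erdős's counting argument shows that the reciprocals of the primes
   diverge: of the numbers 1, ..., 2^t at most (t+1)^N have all their prime
   factors below N, and every other one is a multiple of a prime p >= N, so
   2^t <= (t+1)^N + 2^t * sum_{N <= p <= 2^t} 1/p, which forces the sum over
   primes in [N, 2^t] to be at least 1/2 once 2^t > 2 (t+1)^N.

   For a prime p the differences l - m (m < l) of elements of B_p are the
   multiples d p with 0 < d < p, each occurring fewer than p times, so
   Bsum a p <= p * S(p) with S(p) = sum_{0 < d < p} a(d p).  The products d p
   are pairwise distinct across primes, hence the S(p) over any set of primes
   add up to at most sum a <= 1.  Weighting by 1/p, the mean of Bsum a p over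
   the primes of [N, M) is at most 1 / sum_{N <= p < M} 1/p, which is below
   eps for M large, so some prime p >= N has Bsum a p < eps. *)

Definition smooth (N n : nat) : bool := all (fun p => p < N) (primes n).

Lemma leq_sq_exp2 s : 4 <= s -> s * s <= 2 ^ s.
Proof.
elim: s => // s IHs; rewrite leq_eqVlt => /orP[/eqP <- //|s_ge4].
have := IHs s_ge4; rewrite expnS; nia.
Qed.

Lemma exp2_dominates_poly N : exists t, t.+1 ^ N * 2 < 2 ^ t.
Proof.
pose s := N + 4.
have s_sq := @leq_sq_exp2 s (leq_addl N 4).
have exp_gt0 : 0 < 2 ^ s by rewrite expn_gt0.
exists (2 ^ s).-1; rewrite prednK // -expnM -expnSr ltn_exp2l //.
rewrite /s in s_sq *; nia.
Qed.

Lemma logn_leq_exp2 p n t : 0 < n -> n <= 2 ^ t -> logn p n <= t.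
Proof.
move=> n_gt0 n_le.
have [->//|logn_gt0] := posnP (logn p n).
have p_prime : prime p by move: logn_gt0; rewrite logn_gt0 mem_primes => /andP[].
rewrite -(leq_exp2l _ _ (isT : 1 < 2)); apply: leq_trans n_le.
apply: (@leq_trans (p ^ logn p n)); first by rewrite leq_exp2r // prime_gt1.
exact: dvdn_leq (pfactor_dvdnn p n).
Qed.

(* A smooth n <= 2^t is determined by its exponents at the N candidates
   p < N, each of which is at most t. *)
Lemma card_smooth_leq N t :
  \sum_(1 <= n < (2 ^ t).+1 | smooth N n) 1 <= t.+1 ^ N.
Proof.
have -> : \sum_(1 <= n < (2 ^ t).+1 | smooth N n) 1
        = \sum_(0 <= n < (2 ^ t).+1 | (0 < n) && smooth N n) 1.
  rewrite [RHS]big_ltn_cond //= [LHS]big_mkcond [RHS]big_mkcond.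
  by apply: eq_big_nat => i /andP[i_gt0 _]; rewrite i_gt0.
rewrite big_mkord sum1_card.
pose f (i : 'I_(2 ^ t).+1) := [ffun j : 'I_N => (inord (logn j i) : 'I_t.+1)].
apply: leq_trans (_ : _ <= #|{ffun 'I_N -> 'I_t.+1}|) _; last first.
  by rewrite card_ffun !card_ord.
apply: (leq_card_in f) => i j; rewrite !unfold_in /=.
move=> /andP[i_gt0 i_smooth] /andP[j_gt0 j_smooth] /ffunP f_eq.
apply: val_inj; apply: eqn_from_log => // p.
have logn_le (k : 'I_(2 ^ t).+1) : 0 < k -> logn p k <= t.
  by move=> k_gt0; apply: logn_leq_exp2 => //; rewrite -ltnS.
have [p_lt|p_ge] := ltnP p N.
  have := f_eq (Ordinal p_lt); rewrite !ffunE => /(congr1 val) /=.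
  by rewrite !inordK // ltnS logn_le.
have logn0 (k : 'I_(2 ^ t).+1) : smooth N k -> logn p k = 0.
  move=> k_smooth; apply/eqP; rewrite -leqn0 leqNgt logn_gt0; apply/negP => pk.
  by move/allP: k_smooth => /(_ _ pk); rewrite ltnNge p_ge.
by rewrite !logn0.
Qed.

Lemma card_multiples p X : 0 < p -> \sum_(1 <= n < X.+1) (p %| n) = X %/ p.
Proof.
move=> p_gt0; elim: X => [|X IHX]; first by rewrite big_geq ?div0n.
by rewrite big_nat_recr //= IHX divnS // addnC.
Qed.

Lemma nonsmooth_large_prime_divisor N n X : 0 < n -> n <= X -> ~~ smooth N n ->
  1 <= \sum_(N <= p < X.+1 | prime p) (p %| n).
Proof.
move=> n_gt0 n_le /allPn[p]; rewrite mem_primes -leqNgt => /and3P[p_prime _ p_dvd] p_ge.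
have p_le : p <= X by apply: leq_trans n_le; apply: dvdn_leq.
rewrite big_mkcond (bigD1_seq p) ?iota_uniq //=; first by rewrite p_prime p_dvd.
by rewrite mem_index_iota p_ge ltnS.
Qed.

Lemma erdos_count N t :
  2 ^ t <= t.+1 ^ N + \sum_(N <= p < (2 ^ t).+1 | prime p) (2 ^ t %/ p).
Proof.
set X := 2 ^ t.
have {1}-> : X = \sum_(1 <= n < X.+1) 1.
  by rewrite sum_nat_const_nat subSS subn0 muln1.
rewrite (bigID (smooth N)) /=; apply: leq_add; first exact: card_smooth_leq.
apply: (@leq_trans (\sum_(1 <= n < X.+1) \sum_(N <= p < X.+1 | prime p) (p %| n))).
  rewrite [leqRHS](bigID (smooth N)) /=; apply: leq_trans (leq_addl _ _).
  rewrite big_nat_cond [leqRHS]big_nat_cond; apply: leq_sum.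
  move=> n /andP[/andP[n_gt0 n_lt] n_nonsmooth].
  by apply: nonsmooth_large_prime_divisor; rewrite // -ltnS.
rewrite exchange_big /=; apply: leq_sum => p p_prime.
by rewrite card_multiples // prime_gt0.
Qed.

Local Open Scope ring_scope.

Lemma prime_recip_block_ge_half (R : realFieldType) N :
  exists M, 1 / 2 <= \sum_(N <= p < M | prime p) (p%:R : R)^-1.
Proof.
have [t dom] := exp2_dominates_poly N.
set X := (2 ^ t)%N in dom *; exists X.+1.
have X_gt0 : (0 : R) < X%:R by rewrite ltr0n /X expn_gt0.
set S := \sum_(N <= p < X.+1 | prime p) (p%:R : R)^-1.
set A := ((t.+1 ^ N)%N%:R : R).
have count_le : (X%:R : R) <= A + X%:R * S.
  apply: le_trans (_ : _ <= ((t.+1 ^ N + \sum_(N <= p < X.+1 | prime p) (X %/ p))%N)%:R) _.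
    by rewrite ler_nat erdos_count.
  rewrite natrD lerD2l natr_sum /S mulr_sumr; apply: ler_sum => p p_prime.
  have p_gt0 : (0 : R) < p%:R by rewrite ltr0n prime_gt0.
  by rewrite ler_pdivlMr // -natrM ler_nat leq_divM.
have A_small : A * 2 < X%:R by rewrite /A -(natrM R _ 2) ltr_nat.
rewrite -(ler_pM2l X_gt0) mul1r.
move: count_le A_small; set Y := (X%:R : R); set Z := Y * S.
by clearbody Z; lra.
Qed.

Lemma prime_recip_sum_unbounded (R : archiRealFieldType) N (c : R) :
  exists M, c < \sum_(N <= p < M | prime p) (p%:R : R)^-1.
Proof.
suff half_multiple K : exists M, K%:R / 2 <= \sum_(N <= p < M | prime p) (p%:R : R)^-1.
  have [M HM] := half_multiple (Num.truncn (c * 2)).+1; exists M.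
  apply: lt_le_trans HM; rewrite ltr_pdivlMr //; exact: truncnS_gt.
suff : exists2 M, (N <= M)%N & K%:R / 2 <= \sum_(N <= p < M | prime p) (p%:R : R)^-1.
  by case=> M _; exists M.
elim: K => [|K [M1 N_le IHK]].
  by exists N => //; rewrite big_geq // mul0r.
have [M2 block] := prime_recip_block_ge_half R M1.
have M1_le : (M1 <= M2)%N.
  rewrite leqNgt; apply/negP => lt; move: block; rewrite big_geq; last exact: ltnW.
  by rewrite ler_pdivrMr ?ltr0n // mul0r ler10.
exists M2; first exact: leq_trans M1_le.
rewrite (big_cat_nat N_le M1_le) /= -natr1 mulrDl.
by move: IHK block; lra.
Qed.

Lemma uniq_sub_ler_sum (R : numDomainType) (I : eqType) (s t : seq I) (F : I -> R) :
  uniq s -> uniq t -> {subset s <= t} -> (forall i, i \in t -> 0 <= F i) ->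
  \sum_(i <- s) F i <= \sum_(i <- t) F i.
Proof.
move=> s_uniq t_uniq s_sub F_ge0.
rewrite [leRHS](bigID (mem s)) /= -[\sum_(i <- t | i \in s) F i]big_filter.
have s_perm : perm_eq [seq i <- t | i \in s] s.
  apply: uniq_perm; rewrite ?filter_uniq // => i; rewrite mem_filter.
  by apply/andP/idP => [[]//|i_s]; split; last exact: s_sub.
rewrite (perm_big _ s_perm) lerDl big_seq_cond sumr_ge0 // => i /andP[i_t _].
exact: F_ge0.
Qed.

Lemma has_lt_weighted_mean (R : realDomainType) (I : eqType) (s : seq I)
    (w x : I -> R) c :
  (forall i, 0 <= w i) -> \sum_(i <- s) w i * x i < c * \sum_(i <- s) w i ->
  has (fun i => x i < c) s.
Proof.
move=> w_ge0; apply: contraTT; rewrite -all_predC => /allP x_ge.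
rewrite -leNgt mulr_sumr big_seq [leRHS]big_seq; apply: ler_sum => i s_i.
by rewrite mulrC ler_wpM2l // leNgt; apply: x_ge.
Qed.

Lemma mul_prime_inj p1 p2 d1 d2 : prime p1 -> prime p2 ->
  (0 < d1 < p1)%N -> (0 < d2 < p2)%N -> (d1 * p1 = d2 * p2)%N ->
  p1 = p2 /\ d1 = d2.
Proof.
move=> p1_prime p2_prime /andP[d1_gt0 d1_lt] /andP[d2_gt0 d2_lt] eq_prod.
have eq_or_lt q1 q2 e1 e2 : prime q1 -> prime q2 -> (0 < e2 < q2)%N ->
    (e1 * q1 = e2 * q2)%N -> q1 = q2 \/ (q1 < q2)%N.
  move=> q1_prime q2_prime /andP[e2_gt0 e2_lt] eq_q.
  have : (q1 %| e2 * q2)%N by rewrite -eq_q dvdn_mull.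
  rewrite Euclid_dvdM // => /orP[q1_dvd|q1_dvd].
    by right; exact: leq_ltn_trans (dvdn_leq e2_gt0 q1_dvd) e2_lt.
  by left; apply/eqP; rewrite -dvdn_prime2.
have p_eq : p1 = p2.
  case: (eq_or_lt _ _ _ _ p1_prime p2_prime _ eq_prod) => [|//|lt12]; first lia.
  case: (eq_or_lt _ _ _ _ p2_prime p1_prime _ (esym eq_prod)) => [|//|lt21]; lia.
split=> //; move: eq_prod; rewrite p_eq => /eqP; rewrite eqn_mul2r.
by case/orP=> /eqP // p2_0; move: p2_prime; rewrite p2_0.
Qed.

Definition multiples_sum {R : realType} (a : nat -> R) (p : nat) : R :=
  \sum_(d <- iota 1 p.-1) a (d * p)%N.

Section NonnegativeSequence.

Variables (R : realType) (a : nat -> R).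
Hypothesis a_ge0 : forall n, (0 < n)%N -> 0 <= a n.

Lemma sum_multiples_sum_primes_le1 (P : seq nat) :
  (forall N, \sum_(1 <= n < N.+1) a n <= 1) -> uniq P -> all prime P ->
  \sum_(p <- P) multiples_sum a p <= 1.
Proof.
move=> a_sum_le1 P_uniq /allP P_prime.
set M := (\max_(p <- P) p)%N.
have P_le p : p \in P -> (p <= M)%N by move=> P_p; exact: leq_bigmax_seq.
rewrite /multiples_sum -(big_allpairs_dep (h := fun p d => (d * p)%N)).
apply: le_trans (a_sum_le1 (M * M)%N).
rewrite /index_iota subSS subn0.
have d_range p d : p \in P -> d \in iota 1 p.-1 -> (0 < d < p)%N.
  by move=> P_p; rewrite mem_iota add1n prednK // prime_gt0 // P_prime.
apply: uniq_sub_ler_sum; last by move=> n; rewrite mem_iota => /andP[? _]; apply: a_ge0.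
- apply: allpairs_uniq_dep => // [p _|]; first exact: iota_uniq.
  move=> [p1 d1] [p2 d2] /allpairsPdep[q1 [e1 [P_q1 e1_in [-> ->]]]].
  move=> /allpairsPdep[q2 [e2 [P_q2 e2_in [-> ->]]]] /= eq_prod.
  by case: (@mul_prime_inj q1 q2 e1 e2 (P_prime _ P_q1) (P_prime _ P_q2)
    (d_range _ _ P_q1 e1_in) (d_range _ _ P_q2 e2_in) eq_prod) => -> ->.
- exact: iota_uniq.
- move=> n /allpairsPdep[p [d [P_p d_in ->]]].
  have := d_range _ _ P_p d_in; have := P_le _ P_p.
  rewrite mem_iota; nia.
Qed.

Lemma Bsum_le_multiples_sum n : (0 < n)%N -> Bsum a n <= n%:R * multiples_sum a n.
Proof.
move=> n_gt0; rewrite /Bsum /B big_map.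
have -> : n%:R * multiples_sum a n = \sum_(1 <= k < n.+1) multiples_sum a n.
  by rewrite sumr_const_nat subSS subn0 mulr_natl.
rewrite /index_iota subSS subn0 big_seq [leRHS]big_seq.
apply: ler_sum => k; rewrite mem_iota => /andP[k_ge1 k_lt].
rewrite big_map /multiples_sum -big_filter.
under eq_bigr => j _ do rewrite -mulnBl.
rewrite -(big_map (fun j => (k - j)%N) xpredT (fun d => a (d * n)%N)).
apply: uniq_sub_ler_sum.
- rewrite map_inj_in_uniq ?filter_uniq ?iota_uniq // => j1 j2.
  rewrite !mem_filter !ltn_pmul2r // => /andP[j1_lt _] /andP[j2_lt _]; lia.
- exact: iota_uniq.
- move=> d /mapP[j]; rewrite mem_filter mem_iota ltn_pmul2r // => /andP[j_lt /andP[j_ge1 _]] ->.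
  rewrite mem_iota; lia.
- by move=> d; rewrite mem_iota => /andP[d_ge1 _]; apply: a_ge0; rewrite muln_gt0 d_ge1.
Qed.

End NonnegativeSequence.

Theorem corollary6 (R : realType) (a : nat -> R)
  (ha : forall n, (0 < n)%N -> 0 <= a n)
  (hsum : forall N, \sum_(1 <= n < N.+1) a n <= 1) :
  forall eps : R, 0 < eps ->
  forall N : nat, exists n : nat, (N <= n)%N /\ (0 < n)%N /\ Bsum a n < eps.
Proof.
move=> eps eps_gt0 N.
have [M recip_large] := prime_recip_sum_unbounded R N eps^-1.
set P := [seq p <- index_iota N M | prime p].
have P_prime : all prime P by exact: filter_all.
have : has (fun p => Bsum a p < eps) P.
  apply: (@has_lt_weighted_mean _ _ _ (fun p => p%:R^-1)) => [p|].
    by rewrite invr_ge0.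
  apply: (@le_lt_trans _ _ 1).
    apply: le_trans (@sum_multiples_sum_primes_le1 R a ha P hsum _ P_prime).
      rewrite big_seq [leRHS]big_seq; apply: ler_sum => p P_p.
      have p_gt0 : (0 < p)%N by rewrite prime_gt0 // (allP P_prime).
      by rewrite ler_pdivrMl ?ltr0n // Bsum_le_multiples_sum.
    by rewrite filter_uniq // iota_uniq.
  by rewrite big_filter -ltr_pdivrMl // mulr1.
case/hasP=> p; rewrite mem_filter mem_index_iota => /andP[p_prime /andP[N_le _]] small.
by exists p; rewrite N_le prime_gt0.
Qed.
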